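(* Let $\tau$ be a decorated ideal triangulation of $S$ with underlying ideal triangulation $\lambda$, and let $\tau'$ be obtained from $\tau$ by a reindexing, a mark rotation or a diagonal exchange, with underlying ideal triangulation $\lambda'$. For every exponential Kashaev coordinate vector $(y_1,z_1,\dots,y_{2m},z_{2m})\in\mathbb R_{>0}^{4m}$ of $\tau$, let $(y',z')$ be its Kashaev coordinate change to $\tau'$, let $x=F_\tau(y,z)$ and $x'=F_{\tau'}(y',z')$. Then $x'$ is the shear coordinate change of $x$ from $\lambda$ to $\lambda'$: $x'=x$ if $\tau'$ is obtained by a reindexing or a mark rotation, and $x'$ is given by the diagonal exchange formulas in the context if $\tau'=\varphi_{\mu\nu}(\tau)$.
   Context: Let $\bar S$ be a closed oriented surface of genus $g$, $S=\bar S\setminus\{v_1,\dots,v_p\}$, $p\ge1$, $m:=2g-2+p>0$. An ideal triangulation has $3m$ edges and $2m$ triangles (triangulation of $\bar S$ with vertex set $\{v_1,\dots,v_p\}$; two sides of a triangle may lie on the same edge). A decorated ideal triangulation $\tau$ has triangles numbered $\tau_1,\dots,\tau_{2m}$ and a marked corner in each; forgetting numbering and marks gives its underlying ideal triangulation $\lambda$, whose edges are indexed $\lambda_1,\dots,\lambda_{3m}$. Sides of $\tau_\mu$ are numbered $0,1,2$ counterclockwise, the $0$-side opposite the marked corner. Moves: reindexing $\alpha(\tau)$ ($k$-th triangle is $\tau_{\alpha(k)}$); mark rotation $\rho_i$ (mark of $\tau_i$ moves to the next corner counterclockwise); diagonal exchange $\varphi_{\mu\nu}$, applicable when distinct $\tau_\mu,\tau_\nu$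 share an edge which is the $0$-side of both: write the quadrilateral $\tau_\mu\cup\tau_\nu$ with corners $P,Q,R,T$ in counterclockwise order, $\tau_\mu=TPQ$ marked at $P$, $\tau_\nu=QRT$ marked at $R$, common edge $\lambda_i=QT$, and $\lambda_j=TP$, $\lambda_k=RT$, $\lambda_l=QR$, $\lambda_m=PQ$ (some of $\lambda_j,\lambda_k,\lambda_l,\lambda_m$ may coincide); $\varphi_{\mu\nu}(\tau)$ replaces $QT$ by $PR$, with new $\mu$-th triangle $RTP$ marked at $T$ and new $\nu$-th triangle $PQR$ marked at $Q$, others unchanged; $\lambda'$ has edges $\lambda'_h=\lambda_h$ for $h\ne i$ and $\lambda'_i=PR$. For reindexings and mark rotations $\lambda'=\lambda$ with the same edge indexing. Kashaev coordinate change (exponential coordinates): reindexing: $(y'_k,z'_k)=(y_{\alpha(k)},z_{\alpha(k)})$; mark rotation $\rho_i$: $(y'_i,z'_i)=(z_i/y_i,1/y_i)$, others unchanged; diagonal exchange $\varphi_{\mu\nu}$: $y'_\mu=z_\nu/D$, $z'_\mu=y_\mu/D$, $y'_\nu=z_\mu/D$, $z'_\nu=y_\nu/D$ with $D=y_\mu y_\nu+z_\mu z_\nu$, others unchanged. The map $F_\tau:\mathbb R_{>0}^{4m}\to\mathbb R_{>0}^{3m}$: set $h^0_\mu=y_\mu/z_\mu$, $h^1_\mu=z_\mu$, $h^2_\mu=1/y_\mu$ and $x_h=h^s_\mu h^t_\nu$ whenever $\lambda_h$ bounds the $s$-side of $\tau_\mu$ and the $t$-side of $\tau_\nu$. Shear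 coordinate change for the diagonal exchange at $\lambda_i$: $x'_h=x_h$ for $h\notin\{i,j,k,l,m\}$, $x'_i=x_i^{-1}$, and: Case 1 ($\lambda_j,\lambda_k,\lambda_l,\lambda_m$ distinct): $x'_j=(1+x_i)x_j$, $x'_k=(1+x_i^{-1})^{-1}x_k$, $x'_l=(1+x_i)x_l$, $x'_m=(1+x_i^{-1})^{-1}x_m$; Case 2 ($\lambda_j=\lambda_k$, $\lambda_l\ne\lambda_m$): $x'_j=x_ix_j$, $x'_l=(1+x_i)x_l$, $x'_m=(1+x_i^{-1})^{-1}x_m$; Case 3 ($\lambda_j=\lambda_m$, $\lambda_k\neq\lambda_l$): $x'_j=x_ix_j$, $x'_k=(1+x_i^{-1})^{-1}x_k$, $x'_l=(1+x_i)x_l$; Case 4 ($\lambda_j=\lambda_l$, $\lambda_k\ne\lambda_m$): $x'_j=(1+x_i)^2x_j$, $x'_k=(1+x_i^{-1})^{-1}x_k$, $x'_m=(1+x_i^{-1})^{-1}x_m$; Case 5 ($\lambda_k=\lambda_m$, $\lambda_j\ne\lambda_l$): $x'_j=(1+x_i)x_j$, $x'_k=(1+x_i^{-1})^{-2}x_k$, $x'_l=(1+x_i)x_l$; Case 6 ($\lambda_j=\lambda_k$ and $\lambda_l=\lambda_m$): $x'_j=x_ix_j$, $x'_l=x_ix_l$; Case 7 ($\lambda_j=\lambda_m$ and $\lambda_k=\lambda_l$): $x'_j=x_ix_j$, $x'_k=x_ix_k$; Case 8 ($\lambda_j=\lambda_l$ and $\lambda_k=\lambda_m$): $x'_j=(1+x_i)^2x_j$,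 $x'_k=(1+x_i^{-1})^{-2}x_k$. *)

From mathcomp Require Import all_boot all_order all_algebra all_fingroup.
Set Implicit Arguments. Unset Strict Implicit. Unset Printing Implicit Defensive.
Import Order.TTheory GRing.Theory Num.Theory.
Local Open Scope ring_scope.

(* A decorated ideal triangulation with 2m numbered triangles and 3m numbered
   edges is encoded by  e mu s = index of the edge bounding the s-side of
   triangle tau_mu  (sides numbered 0,1,2 counterclockwise, the 0-side opposite
   the marked corner).  Corner c of a triangle is the corner opposite its
   c-side; in counterclockwise order the s-side runs from corner s+1 to
   corner s+2 (indices mod 3). *)
Definition dtri (m : nat) := 'I_(2 * m)%N -> 'I_3 -> 'I_(3 * m)%N.

Definition side0 : 'I_3 := @Ordinal 3 0 isT.
Definition side1 : 'I_3 := @Ordinal 3 1 isT.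
Definition side2 : 'I_3 := @Ordinal 3 2 isT.

Definition tri_adj (m : nat) (e : dtri m) : rel 'I_(2 * m)%N :=
  fun mu nu => [exists s : 'I_3, exists t : 'I_3, e mu s == e nu t].

(* corner identifications induced by gluing the two sides of each edge
   (orientation reversing, as the surface is oriented) *)
Definition corner_adj (m : nat) (e : dtri m) : rel ('I_(2 * m)%N * 'I_3) :=
  fun a b =>
  [exists s : 'I_3, exists t : 'I_3,
     [&& (a.1, s) != (b.1, t), e a.1 s == e b.1 t &
         ((a.2 == ordS s) && (b.2 == ordS (ordS t))) ||
         ((a.2 == ordS (ordS s)) && (b.2 == ordS t))]].

(* e is a decorated ideal triangulation of the oriented surface of genus g with
   p punctures: every edge bounds exactly two sides, the glued surface is
   connected and has exactly p vertices (Euler characteristic then forces the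
   genus to be g since m = 2g - 2 + p). *)
Definition is_decorated_ideal_triangulation (g p m : nat) (e : dtri m) : Prop :=
  [/\ (forall h : 'I_(3 * m)%N,
         #|[pred a : 'I_(2 * m)%N * 'I_3 | e a.1 a.2 == h]| = 2%N),
      (forall mu nu : 'I_(2 * m)%N, connect (tri_adj e) mu nu) &
      n_comp (corner_adj e) predT = p].

Definition tri_reindex (m : nat) (alpha : {perm 'I_(2 * m)%N}) (e : dtri m) : dtri m :=
  fun k s => e (alpha k) s.

(* mark rotation rho_i: mark moves to the next corner counterclockwise, so the
   new s-side is the old (s+1)-side *)
Definition mark_rot (m : nat) (i : 'I_(2 * m)%N) (e : dtri m) : dtri m :=
  fun k s => if k == i then e k (ordS s) else e k s.

(* diagonal exchange phi_{mu nu} (applicable when mu <> nu and the 0-sides of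
   tau_mu, tau_nu lie on the same edge lambda_i).  With the notation of the
   paper: lambda_j = e mu 1 (TP), lambda_m = e mu 2 (PQ), lambda_l = e nu 1 (QR),
   lambda_k = e nu 2 (RT).  New mu-th triangle RTP marked at T has sides
   (PR, RT, TP) = (i, k, j); new nu-th triangle PQR marked at Q has sides
   (RP, PQ, QR) = (i, m, l); the new edge PR keeps the index i. *)
Definition tri_flip (m : nat) (mu nu : 'I_(2 * m)%N) (e : dtri m) : dtri m :=
  fun k s =>
    if k == mu then
      (if s == side0 then e mu side0 else if s == side1 then e nu side2
       else e mu side1)
    else if k == nu then
      (if s == side0 then e nu side0 else if s == side1 then e mu side2
       else e nu side1)
    else e k s.

Section Coords.
Variable R : realFieldType.

Definition reindex_y (m : nat) (alpha : {perm 'I_(2 * m)%N})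
  (y : 'I_(2 * m)%N -> R) : 'I_(2 * m)%N -> R := fun k => y (alpha k).

Definition rot_y (m : nat) (i : 'I_(2 * m)%N) (y z : 'I_(2 * m)%N -> R)
  : 'I_(2 * m)%N -> R := fun k => if k == i then z i / y i else y k.
Definition rot_z (m : nat) (i : 'I_(2 * m)%N) (y z : 'I_(2 * m)%N -> R)
  : 'I_(2 * m)%N -> R := fun k => if k == i then (y i)^-1 else z k.

Definition flipD (m : nat) (mu nu : 'I_(2 * m)%N) (y z : 'I_(2 * m)%N -> R) : R :=
  y mu * y nu + z mu * z nu.
Definition flip_y (m : nat) (mu nu : 'I_(2 * m)%N) (y z : 'I_(2 * m)%N -> R)
  : 'I_(2 * m)%N -> R := fun k =>
  if k == mu then z nu / flipD mu nu y z
  else if k == nu then z mu / flipD mu nu y z else y k.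
Definition flip_z (m : nat) (mu nu : 'I_(2 * m)%N) (y z : 'I_(2 * m)%N -> R)
  : 'I_(2 * m)%N -> R := fun k =>
  if k == mu then y mu / flipD mu nu y z
  else if k == nu then y nu / flipD mu nu y z else z k.

Definition hcoord (m : nat) (y z : 'I_(2 * m)%N -> R) (mu : 'I_(2 * m)%N)
  (s : 'I_3) : R :=
  if s == side0 then y mu / z mu else if s == side1 then z mu else (y mu)^-1.

Definition Fmap (m : nat) (e : dtri m) (y z : 'I_(2 * m)%N -> R)
  : 'I_(3 * m)%N -> R := fun h =>
  \prod_(a : 'I_(2 * m)%N * 'I_3 | e a.1 a.2 == h) hcoord y z a.1 a.2.

(* Shear coordinate change for the diagonal exchange at lambda_i, with the
   surrounding edges lambda_j, lambda_k, lambda_l, lambda_em.  Each occurrence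
   of h among j, l contributes a factor (1 + x_i), each occurrence among k, em
   a factor (1 + x_i^-1)^-1; this reproduces exactly Cases 1-8 of the paper
   (e.g. (1+x)(1+x^-1)^-1 = x) and their mirror images. *)
Definition shear_flip (m : nat) (i j k l em : 'I_(3 * m)%N)
  (x : 'I_(3 * m)%N -> R) : 'I_(3 * m)%N -> R := fun h =>
  if h == i then (x i)^-1
  else x h * (if h == j then 1 + x i else 1) * (if h == l then 1 + x i else 1)
           * (if h == k then (1 + (x i)^-1)^-1 else 1)
           * (if h == em then (1 + (x i)^-1)^-1 else 1).

End Coords.

(* x_h is a product over the two sides bounding lambda_h of the h-coordinates of
   the triangles, so it suffices to follow these factors triangle by triangle.
   Reindexing permutes the triangles, and a mark rotation permutes the three
   h-coordinates of one triangle cyclically.  A diagonal exchange changes only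
   tau_mu and tau_nu: the diagonal, bounded by their 0-sides and nothing else,
   gets the product of the new 0-coordinates, which is 1/x_i; each outer side
   keeps its edge but its coordinate is multiplied by 1 + x_i or
   (1 + x_i^-1)^-1.  Collecting these factors edge by edge gives all eight
   cases of the shear coordinate change at once. *)

From mathcomp Require Import all_boot all_order all_algebra all_fingroup.
From mathcomp Require Import ring.
Import Order.TTheory GRing.Theory Num.Theory.
Local Open Scope ring_scope.
Set Implicit Arguments. Unset Strict Implicit.

Lemma card2_pred2 (T : finType) (A : {pred T}) a b :
  #|A| = 2%N -> a \in A -> b \in A -> a != b -> A =i pred2 a b.
Proof.
move=> cardA Aa Ab neq_ab x; apply/esym; move: x; apply/subset_cardP.
  by rewrite card2 neq_ab cardA.
by apply/subsetP=> x /pred2P[]->.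
Qed.

Lemma big_pred2 (R : Type) (idx : R) (op : Monoid.com_law idx) (I : finType)
    (a b : I) (P : pred I) (F : I -> R) :
  a != b -> P =1 pred2 a b -> \big[op/idx]_(i | P i) F i = op (F a) (F b).
Proof.
move=> neq_ab PE; rewrite (bigD1 a) ?PE /= ?eqxx // (big_pred1 b) // => i /=.
rewrite PE /=; case: (eqVneq i a) => [->|]; last by rewrite andbT.
by rewrite (negbTE neq_ab).
Qed.

Lemma big_ord3 (R : Type) (idx : R) (op : Monoid.law idx) (F : 'I_3 -> R) :
  \big[op/idx]_(s < 3) F s = op (op (F side0) (F side1)) (F side2).
Proof.
rewrite !big_ord_recr big_ord0 Monoid.mul1m.
by congr (op (op (F _) (F _)) (F _)); apply/val_inj.
Qed.

(* With (a, b, c, d) = (y_mu, z_mu, y_nu, z_nu): the new h-coordinate on each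
   outer side of the quadrilateral, as the old one on that side times its shear
   factor. *)
Lemma shear_factors (F : fieldType) (a b c d : F) :
    a != 0 -> b != 0 -> c != 0 -> d != 0 -> a * c + b * d != 0 ->
  let x := a / b * (c / d) in
  [/\ (d / (a * c + b * d))^-1 = b * (1 + x),
       (b / (a * c + b * d))^-1 = d * (1 + x),
       a / (a * c + b * d) = c^-1 * (1 + x^-1)^-1
     & c / (a * c + b * d) = a^-1 * (1 + x^-1)^-1].
Proof.
by move=> a0 b0 c0 d0 D0 x; rewrite /x; split; field; rewrite ?a0 ?b0 ?c0 ?d0 D0.
Qed.

Definition tri_prod (R : realFieldType) m (e : dtri m) (y z : 'I_(2 * m)%N -> R)
    (h : 'I_(3 * m)%N) (k : 'I_(2 * m)%N) : R :=
  \prod_(s < 3 | e k s == h) hcoord y z k s.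

Section Fmap.
Variables (R : realFieldType) (m : nat).
Implicit Types (e : dtri m) (y z : 'I_(2 * m)%N -> R).

Lemma Fmap_tri_prod e y z h : Fmap e y z h = \prod_k tri_prod e y z h k.
Proof. by rewrite /tri_prod pair_big_dep. Qed.

Lemma Fmap_bigD2 e y z h (mu nu : 'I_(2 * m)%N) : mu != nu ->
  Fmap e y z h = tri_prod e y z h mu * tri_prod e y z h nu *
                 \prod_(k | (k != mu) && (k != nu)) tri_prod e y z h k.
Proof.
move=> neq_mn; rewrite Fmap_tri_prod (bigD1 mu) // (bigD1 nu) 1?eq_sym //= mulrA.
by congr (_ * _); apply: eq_bigl => k; rewrite andbC.
Qed.

Lemma tri_prod_sides e y z h k :
  tri_prod e y z h k =
    (if e k side0 == h then hcoord y z k side0 else 1) *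
    (if e k side1 == h then hcoord y z k side1 else 1) *
    (if e k side2 == h then hcoord y z k side2 else 1).
Proof. by rewrite /tri_prod big_mkcond big_ord3. Qed.

Lemma Fmap_pred2 e y z h (a b : 'I_(2 * m)%N * 'I_3) : a != b ->
  (forall k s, (e k s == h) = ((k, s) == a) || ((k, s) == b)) ->
  Fmap e y z h = hcoord y z a.1 a.2 * hcoord y z b.1 b.2.
Proof.
by move=> neq_ab eE; rewrite /Fmap (big_pred2 _ _ neq_ab).
Qed.

Lemma Fmap_reindex (alpha : {perm 'I_(2 * m)%N}) e y z h :
  Fmap (tri_reindex alpha e) (reindex_y alpha y) (reindex_y alpha z) h = Fmap e y z h.
Proof. by rewrite !Fmap_tri_prod [RHS](reindex_inj (@perm_inj _ alpha)). Qed.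

Lemma hcoord_rot i y z s : y i != 0 ->
  hcoord (rot_y i y z) (rot_z i y z) i s = hcoord y z i (ordS s).
Proof.
move=> yi0; rewrite /hcoord /rot_y /rot_z eqxx.
by case: s => -[|[|[|//]]] ? /=; [field | | rewrite invf_div].
Qed.

Lemma Fmap_mark_rot i e y z h : y i != 0 ->
  Fmap (mark_rot i e) (rot_y i y z) (rot_z i y z) h = Fmap e y z h.
Proof.
move=> yi0; rewrite !Fmap_tri_prod; apply: eq_bigr => k _.
rewrite /tri_prod /mark_rot; case: (eqVneq k i) => [->|ne_ki].
  by rewrite [RHS](reindex_inj (@ordS_inj 3)); apply: eq_bigr => s _; rewrite hcoord_rot.
by apply: eq_bigr => s _; rewrite /hcoord /rot_y /rot_z (negbTE ne_ki).
Qed.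

End Fmap.

Section DiagonalExchange.
Variables (R : realFieldType) (m : nat) (e : dtri m) (y z : 'I_(2 * m)%N -> R).
Hypothesis yz_gt0 : forall k, 0 < y k /\ 0 < z k.
Hypothesis edge_two_sides : forall h : 'I_(3 * m)%N,
  #|[pred a : 'I_(2 * m)%N * 'I_3 | e a.1 a.2 == h]| = 2%N.
Variables mu nu : 'I_(2 * m)%N.
Hypothesis neq_mu_nu : mu != nu.
Hypothesis diag_mu_nu : e mu side0 = e nu side0.

Local Notation i := (e mu side0).
Local Notation e' := (tri_flip mu nu e).
Local Notation y' := (flip_y mu nu y z).
Local Notation z' := (flip_z mu nu y z).

Lemma y_neq0 k : y k != 0. Proof. by have [/lt0r_neq0] := yz_gt0 k. Qed.
Lemma z_neq0 k : z k != 0. Proof. by have [_ /lt0r_neq0] := yz_gt0 k. Qed.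

Lemma flipD_neq0 : flipD mu nu y z != 0.
Proof.
have [? ?] := yz_gt0 mu; have [? ?] := yz_gt0 nu.
by rewrite lt0r_neq0 // addr_gt0 ?mulr_gt0.
Qed.

Lemma side_on_diagonal k s :
  (e k s == i) = ((k, s) == (mu, side0)) || ((k, s) == (nu, side0)).
Proof.
have := card2_pred2 (a := (mu, side0)) (b := (nu, side0)) (edge_two_sides i).
rewrite !inE /= -diag_mu_nu eqxx xpair_eqE (negbTE neq_mu_nu).
by move=> /(_ isT isT isT (k, s)).
Qed.

Lemma neq_nu_mu : nu != mu. Proof. by rewrite eq_sym. Qed.

Lemma flip_side_on_diagonal k s :
  (e' k s == i) = ((k, s) == (mu, side0)) || ((k, s) == (nu, side0)).
Proof.
rewrite /tri_flip.
case: (eqVneq k mu) => [->|k_mu]; last case: (eqVneq k nu) => [->|k_nu].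
1,2: by case: s => -[|[|[|//]]] ? /=; rewrite ?side_on_diagonal !xpair_eqE
       ?eqxx ?(negbTE neq_mu_nu) ?(negbTE neq_nu_mu).
- by rewrite side_on_diagonal !xpair_eqE (negbTE k_mu) (negbTE k_nu).
Qed.

Lemma pair_mu_nu_neq : (mu, side0) != (nu, side0).
Proof. by rewrite xpair_eqE (negbTE neq_mu_nu). Qed.

Local Notation D := (flipD mu nu y z).

Lemma flip_y_mu : y' mu = z nu / D. Proof. by rewrite /flip_y eqxx. Qed.
Lemma flip_z_mu : z' mu = y mu / D. Proof. by rewrite /flip_z eqxx. Qed.
Lemma flip_y_nu : y' nu = z mu / D.
Proof. by rewrite /flip_y (negbTE neq_nu_mu) eqxx. Qed.
Lemma flip_z_nu : z' nu = y nu / D.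
Proof. by rewrite /flip_z (negbTE neq_nu_mu) eqxx. Qed.

Lemma Fmap_diagonal : Fmap e y z i = y mu / z mu * (y nu / z nu).
Proof. by rewrite (Fmap_pred2 _ _ pair_mu_nu_neq side_on_diagonal). Qed.

Lemma Fmap_flip_diagonal : Fmap e' y' z' i = (Fmap e y z i)^-1.
Proof.
rewrite Fmap_diagonal (Fmap_pred2 _ _ pair_mu_nu_neq flip_side_on_diagonal) /=.
rewrite /hcoord flip_y_mu flip_z_mu flip_y_nu flip_z_nu /=.
by field; rewrite flipD_neq0 !y_neq0 !z_neq0.
Qed.

Lemma tri_prod_flip_out h k : k != mu -> k != nu ->
  tri_prod e' y' z' h k = tri_prod e y z h k.
Proof.
move=> /negbTE k_mu /negbTE k_nu.
by rewrite /tri_prod /tri_flip /hcoord /flip_y /flip_z k_mu k_nu.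
Qed.

Lemma Fmap_flip_off_diagonal h : h != i ->
  Fmap e' y' z' h =
  shear_flip i (e mu side1) (e nu side2) (e nu side1) (e mu side2) (Fmap e y z) h.
Proof.
move=> h_i; rewrite /shear_flip (negbTE h_i) Fmap_diagonal.
rewrite !(Fmap_bigD2 _ _ _ _ neq_mu_nu).
under eq_bigr => k /andP[k_mu k_nu] do rewrite tri_prod_flip_out //.
have /negbTE i_h : i != h by rewrite eq_sym.
rewrite !tri_prod_sides /tri_flip !eqxx (negbTE neq_nu_mu) -diag_mu_nu i_h !(eq_sym h).
rewrite /hcoord flip_y_mu flip_z_mu flip_y_nu flip_z_nu /=.
have [gain_mu gain_nu loss_mu loss_nu] :=
  shear_factors (y_neq0 mu) (z_neq0 mu) (y_neq0 nu) (z_neq0 nu) flipD_neq0.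
rewrite /flipD gain_mu gain_nu loss_mu loss_nu.
by do 4!case: (_ == h) => /=; ring.
Qed.

Lemma Fmap_flip h :
  Fmap e' y' z' h =
  shear_flip i (e mu side1) (e nu side2) (e nu side1) (e mu side2) (Fmap e y z) h.
Proof.
have [->|h_i] := eqVneq h i; last exact: Fmap_flip_off_diagonal.
by rewrite Fmap_flip_diagonal /shear_flip eqxx.
Qed.

End DiagonalExchange.

Theorem proposition4p4 (R : realFieldType) (g p m : nat)
  (hp : (0 < p)%N) (hm : (0 < m)%N) (hgpm : (m + 2 = 2 * g + p)%N)
  (e : dtri m) (he : @is_decorated_ideal_triangulation g p m e)
  (y z : 'I_(2 * m)%N -> R) (hyz : forall k, 0 < y k /\ 0 < z k) :
  (forall alpha : {perm 'I_(2 * m)%N},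
     forall h, Fmap (tri_reindex alpha e) (reindex_y alpha y) (reindex_y alpha z) h
               = Fmap e y z h) /\
  (forall i : 'I_(2 * m)%N,
     forall h, Fmap (mark_rot i e) (rot_y i y z) (rot_z i y z) h
               = Fmap e y z h) /\
  (forall mu nu : 'I_(2 * m)%N, mu != nu -> e mu side0 = e nu side0 ->
     forall h, Fmap (tri_flip mu nu e) (flip_y mu nu y z) (flip_z mu nu y z) h
               = shear_flip (e mu side0) (e mu side1) (e nu side2)
                            (e nu side1) (e mu side2) (Fmap e y z) h).
Proof.
have [edge_two_sides _ _] := he.
split; first by move=> alpha h; apply: Fmap_reindex.
split; first by move=> i h; apply: Fmap_mark_rot; have [/lt0r_neq0] := hyz i.
by move=> mu nu neq_mu_nu diag_mu_nu h; apply: Fmap_flip.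
Qed.
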